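(* Let $S_\omega$ and $S_{\omega'}$ be standard graded skew polynomial algebras in $n$ variables at cube roots of unity. Then the following are equivalent: (i) the point simplicial complexes $\Delta_\omega$ and $\Delta_{\omega'}$ are isomorphic; (ii) there exists a permutation $\sigma\in\mathfrak{S}_n$ such that, for every $v\in[n]$, $\sigma$ is an isomorphism from the underlying graph of $I_v(M_\omega)$ to the underlying graph of $I_{\sigma(v)}(M_{\omega'})$.
   Context: Let $k$ be an algebraically closed field of characteristic $0$; fix a primitive cube root of unity $\zeta_3$. For $\omega=(\omega_{ij})$ with $\omega_{ii}=1$, $\omega_{ij}\omega_{ji}=1$, all cube roots of unity, $S_\omega=k\langle x_1,\dots,x_n\rangle/(x_ix_j-\omega_{ij}x_jx_i)$ with $\deg x_i=1$; its E-matrix is $M_\omega=(m_{ij})$ over $\mathbb{Z}/3\mathbb{Z}$ with $\omega_{ij}=\zeta_3^{m_{ij}}$ (viewed as a digraph on $[n]$ with an edge $i\to j$ iff $m_{ij}=1$). The point simplicial complex $\Delta_\omega$ has vertex set $[n]$ and faces the $F\subset[n]$ with $\omega_{ij}\omega_{jh}\omega_{hi}=1$ for all distinct $i,j,h\in F$; isomorphism of simplicial complexes means a bijection of vertex sets inducing a bijection of facets. For $v\in[n]$ let $X_v$ be the matrix with $(X_v)_{iv}=1$, $(X_v)_{vi}=-1$ for $i\ne v$ and other entries $0$. The isolation $I_v(M)$ of a skew-symmetric $M$ over $\mathbb{Z}/3\mathbb{Z}$ at $v$ is the unique matrix of the form $M+\sum_{u=1}^n a_uX_u$ ($a_u\in\mathbb{Z}/3\mathbb{Z}$)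 whose $v$-th row and column are zero (i.e., $v$ is an isolated vertex). The underlying graph of a skew-symmetric $N=(n_{ij})$ is the simple undirected graph on $[n]$ with $i,j$ adjacent iff $n_{ij}\ne0$. *)

From HB Require Import structures.
From mathcomp Require Import all_boot all_order all_algebra all_fingroup.
Set Implicit Arguments. Unset Strict Implicit. Unset Printing Implicit Defensive.
Import Order.TTheory GRing.Theory.
Local Open Scope ring_scope.

Section Defs.
Variables (k : fieldType) (n : nat).

Definition cube_root_param (w : 'M[k]_n) : Prop :=
  [/\ forall i, w i i = 1,
      forall i j, w i j * w j i = 1
    & forall i j, (w i j) ^+ 3 = 1].

Definition Emat (zeta : k) (w : 'M[k]_n) : 'M['Z_3]_n :=
  \matrix_(i, j) odflt 0 [pick m : 'Z_3 | zeta ^+ (m : nat) == w i j].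

Definition is_face (w : 'M[k]_n) (F : {set 'I_n}) : bool :=
  [forall i in F, forall j in F, forall h in F,
     [&& i != j, j != h & h != i] ==> (w i j * w j h * w h i == 1)].

Definition is_facet (w : 'M[k]_n) (F : {set 'I_n}) : bool :=
  is_face w F && [forall G : {set 'I_n}, (is_face w G && (F \subset G)) ==> (G == F)].

Definition complex_iso (w w' : 'M[k]_n) : Prop :=
  exists s : 'S_n, forall F : {set 'I_n}, is_facet w F = is_facet w' (s @: F).
End Defs.

Section Iso.
Variable n : nat.

Definition Xmat (v : 'I_n) : 'M['Z_3]_n :=
  \matrix_(i, j) (if (j == v) && (i != v) then 1
                  else if (i == v) && (j != v) then -1 else 0).

(* N is the isolation I_v(M): N is of the form M + sum_u a_u X_u and has
   its v-th row and column zero (such N is unique) *)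
Definition is_isolation (M : 'M['Z_3]_n) (v : 'I_n) (N : 'M['Z_3]_n) : Prop :=
  (exists a : 'I_n -> 'Z_3, N = M + \sum_(u < n) a u *: Xmat u) /\
  (forall i, N v i = 0 /\ N i v = 0).

Definition graph_iso (s : 'S_n) (N N' : 'M['Z_3]_n) : Prop :=
  forall i j, (N i j != 0) = (N' (s i) (s j) != 0).
End Iso.

(** Writing [w i j = zeta ^+ E i j], a triple [i, j, h] spans a face of the
    point complex exactly when the triangle sum [E i j + E j h + E h i]
    vanishes in [Z/3Z]; so both complexes are clique complexes of a
    3-uniform hypergraph, and since faces are the subsets of facets, a
    permutation is an isomorphism of complexes iff it preserves the vanishing
    of triangle sums.  On the other hand the isolation [I_v(E)] is the matrix
    of triangle sums [E i j + E j v + E v i], so its underlying graph records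
    which triangles through [v] have nonzero sum: condition (ii) is the same
    preservation property. *)

From HB Require Import structures.
From mathcomp Require Import all_boot all_order all_algebra all_fingroup.
From mathcomp Require Import ring.
Import GRing.Theory.
Local Open Scope ring_scope.
Set Implicit Arguments. Unset Strict Implicit.

Section MaxsetPerm.
Variables (T : finType) (s : {perm T}).
Implicit Types (F G : {set T}) (p q : pred {set T}).

Lemma imset_permKV G : s @: ((s^-1)%g @: G) = G.
Proof.
by rewrite -imset_comp -[RHS]imset_id; apply: eq_imset => x /=; rewrite permKV.
Qed.

Lemma imset_perm_subset F G : (s @: F \subset s @: G) = (F \subset G).
Proof.
apply/idP/idP => [sFG|]; last exact: imsetS.
apply/subsetP => x xF.
by rewrite -(mem_imset _ _ (@perm_inj _ s)) (subsetP sFG) ?imset_f.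
Qed.

Lemma maxset_imset_perm p q :
  (forall F, p F = q (s @: F)) -> forall F, maxset p F = maxset q (s @: F).
Proof.
move=> pq F; apply/maxsetP/maxsetP => -[pF maxF].
  split=> [|G]; first by rewrite -pq.
  by rewrite -[G]imset_permKV -pq imset_perm_subset => pG /(maxF _ pG) ->.
split=> [|G]; first by rewrite pq.
rewrite pq -imset_perm_subset => qG /(maxF _ qG).
by move/(imset_inj (@perm_inj _ s)).
Qed.

Lemma downward_closed_maxsetE p F :
    (forall F G, F \subset G -> p G -> p F) ->
  p F = [exists G, maxset p G && (F \subset G)].
Proof.
move=> p_sub; apply/idP/existsP => [pF | [G /andP [/maxsetp pG sFG]]].
  by have [G maxG sFG] := maxset_exists pF; exists G; rewrite maxG.
exact: p_sub sFG pG.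
Qed.

Lemma maxset_imset_permE p q :
    (forall F G, F \subset G -> p G -> p F) ->
    (forall F G, F \subset G -> q G -> q F) ->
  (forall F, maxset p F = maxset q (s @: F)) <-> (forall F, p F = q (s @: F)).
Proof.
move=> p_sub q_sub; split=> [maxpq F|]; last exact: maxset_imset_perm.
rewrite (downward_closed_maxsetE _ p_sub) (downward_closed_maxsetE _ q_sub).
apply/existsP/existsP => -[G].
  by rewrite maxpq -(imset_perm_subset F); exists (s @: G).
by rewrite -[G]imset_permKV -maxpq imset_perm_subset; exists ((s^-1)%g @: G).
Qed.

End MaxsetPerm.

Section CliqueComplex.
Variable T : finType.
Implicit Types (R : T -> T -> T -> bool) (F G : {set T}).

Definition tri_closed R F := [forall i in F, forall j in F, forall h in F, R i j h].

Lemma tri_closedP R F :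
  reflect (forall i j h, i \in F -> j \in F -> h \in F -> R i j h) (tri_closed R F).
Proof.
apply: (iffP forall_inP) => [RF i j h iF jF hF | RF i iF].
  by move: (RF i iF) => /forall_inP/(_ j jF)/forall_inP/(_ h hF).
by apply/forall_inP => j jF; apply/forall_inP => h hF; apply: RF.
Qed.

Lemma tri_closedS R F G : F \subset G -> tri_closed R G -> tri_closed R F.
Proof.
move=> sFG /tri_closedP RG; apply/tri_closedP => i j h iF jF hF.
by apply: RG; apply: (subsetP sFG).
Qed.

Lemma tri_closed_imset R R' (f : T -> T) :
    (forall i j h, R i j h = R' (f i) (f j) (f h)) ->
  forall F, tri_closed R F = tri_closed R' (f @: F).
Proof.
move=> RR' F; apply/tri_closedP/tri_closedP => [RF x y z | R'F i j h iF jF hF].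
  by move=> /imsetP [i iF ->] /imsetP [j jF ->] /imsetP [h hF ->]; rewrite -RR' RF.
by rewrite RR' R'F ?imset_f.
Qed.

Section Symmetric.
Variable R : T -> T -> T -> bool.
Hypotheses (R_rot : forall i j h, R i j h = R j h i)
           (R_swap : forall i j h, R i j h = R j i h)
           (R_degen : forall i h, R i i h).

Lemma tri_closed_set3 i j h : tri_closed R [set i; j; h] = R i j h.
Proof.
have R_degen2 x y : R x y y by rewrite R_rot.
have R_degen3 x y : R x y x by rewrite -R_rot.
apply/tri_closedP/idP => [|Rijh x y z]; first by apply; rewrite !inE eqxx ?orbT.
by rewrite !inE => /orP[/orP[]|]/eqP-> /orP[/orP[]|]/eqP-> /orP[/orP[]|]/eqP->;
  rewrite ?R_degen ?R_degen2 ?R_degen3 //;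
  first [ by rewrite R_rot | by rewrite -R_rot | by rewrite R_swap
        | by rewrite R_swap R_rot | by rewrite R_swap -R_rot ].
Qed.

End Symmetric.

Lemma tri_closed_permE R R' (s : {perm T}) :
    (forall i j h, R i j h = R j h i) -> (forall i j h, R i j h = R j i h) ->
    (forall i h, R i i h) ->
    (forall i j h, R' i j h = R' j h i) -> (forall i j h, R' i j h = R' j i h) ->
    (forall i h, R' i i h) ->
  (forall F, tri_closed R F = tri_closed R' (s @: F)) <->
  (forall i j h, R i j h = R' (s i) (s j) (s h)).
Proof.
move=> Rrot Rswap Rdegen R'rot R'swap R'degen.
split=> [RR' i j h|]; last exact: tri_closed_imset.
by rewrite -tri_closed_set3 // RR' !imsetU !imset_set1 tri_closed_set3.
Qed.

End CliqueComplex.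

Lemma Z3_eq_opp (x : 'Z_3) : x = - x -> x = 0.
Proof. by case: x => -[|[|[|]]] // ? _; apply: val_inj. Qed.

Section Isolation.
Variable n : nat.
Implicit Types (M : 'M['Z_3]_n) (a : 'I_n -> 'Z_3) (i j h u v : 'I_n).

Definition tri_sum M i j h := M i j + M j h + M h i.

Definition tri_vanish M i j h := tri_sum M i j h == 0.

Definition isolation M v : 'M['Z_3]_n := \matrix_(i, j) tri_sum M i j v.

Lemma XmatE u i j : Xmat u i j = (j == u)%:R - (i == u)%:R.
Proof. by rewrite mxE; case: (j == u); case: (i == u); rewrite ?subrr ?subr0 ?sub0r. Qed.

Lemma sum_XmatE a i j : (\sum_u a u *: Xmat u) i j = a j - a i.
Proof.
rewrite summxE.
under eq_bigr => u _ do rewrite mxE XmatE mulrBr !mulr_natr !mulrb ![_ == u]eq_sym.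
by rewrite sumrB -!big_mkcond /= !big_pred1_eq.
Qed.

Lemma tri_sum_rot M i j h : tri_sum M i j h = tri_sum M j h i.
Proof. by rewrite /tri_sum [RHS]addrC addrA. Qed.

Lemma tri_vanish_rot M i j h : tri_vanish M i j h = tri_vanish M j h i.
Proof. by rewrite /tri_vanish tri_sum_rot. Qed.

Section Skew.
Variable M : 'M['Z_3]_n.
Hypothesis M_skew : forall i j, M j i = - M i j.

Lemma skew_diag i : M i i = 0.
Proof. exact/Z3_eq_opp/M_skew. Qed.

Lemma tri_sum_swap i j h : tri_sum M j i h = - tri_sum M i j h.
Proof. by rewrite /tri_sum (M_skew i j) (M_skew j h) (M_skew h i); ring. Qed.

Lemma tri_sum_degen i h : tri_sum M i i h = 0.
Proof. by rewrite /tri_sum skew_diag (M_skew h i); ring. Qed.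

Lemma tri_vanish_swap i j h : tri_vanish M i j h = tri_vanish M j i h.
Proof. by rewrite /tri_vanish tri_sum_swap oppr_eq0. Qed.

Lemma tri_vanish_degen i h : tri_vanish M i i h.
Proof. by rewrite /tri_vanish tri_sum_degen. Qed.

Lemma is_isolation_isolation v : is_isolation M v (isolation M v).
Proof.
split.
  exists (fun u => M u v); apply/matrixP => i j.
  by rewrite !mxE sum_XmatE /tri_sum (M_skew i v); ring.
move=> i; rewrite !mxE -tri_sum_rot tri_sum_degen; split=> //.
by rewrite tri_sum_rot tri_sum_degen.
Qed.

Lemma is_isolation_uniq v N : is_isolation M v N -> N = isolation M v.
Proof.
move=> [[a ->] Nv].
have a_row j : a j = a v - M v j.
  by move: (Nv j).1; rewrite !mxE sum_XmatE => Nvj; rewrite -[LHS]subr0 -Nvj; ring.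
apply/matrixP => i j; rewrite !mxE sum_XmatE /tri_sum (a_row i) (a_row j) (M_skew j v).
ring.
Qed.

End Skew.

Lemma isolation_graph_isoE M M' (s : 'S_n) :
    (forall i j, M j i = - M i j) -> (forall i j, M' j i = - M' i j) ->
  (forall v N N',
     is_isolation M v N -> is_isolation M' (s v) N' -> graph_iso s N N') <->
  (forall i j h, tri_vanish M i j h = tri_vanish M' (s i) (s j) (s h)).
Proof.
move=> M_skew M'_skew; split=> [iso i j h | vanish v N N'].
  have := iso h _ _ (is_isolation_isolation M_skew h)
    (is_isolation_isolation M'_skew (s h)) i j.
  by rewrite !mxE => /negb_inj.
move=> /(is_isolation_uniq M_skew) -> /(is_isolation_uniq M'_skew) -> i j.
by rewrite !mxE -[_ != 0]/(~~ tri_vanish _ _ _ _) vanish.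
Qed.

End Isolation.

Section ExponentMatrix.
Variables (k : fieldType) (zeta : k) (n : nat).
Hypothesis zeta_prim : 3.-primitive_root zeta.

Definition zeta_exp (m : 'Z_3) : k := zeta ^+ m.

Lemma zeta_expD a b : zeta_exp (a + b) = zeta_exp a * zeta_exp b.
Proof. by rewrite /zeta_exp -exprD /= (prim_expr_mod zeta_prim). Qed.

Lemma zeta_exp0 : zeta_exp 0 = 1.
Proof. exact: expr0. Qed.

Lemma zeta_exp_inj : injective zeta_exp.
Proof.
move=> a b /eqP; rewrite /zeta_exp (eq_prim_root_expr zeta_prim) => /eqP.
by rewrite !modn_small ?ltn_ord // => /val_inj.
Qed.

Variable w : 'M[k]_n.
Hypothesis w_param : cube_root_param w.
Let E := Emat zeta w.

Lemma zeta_exp_Emat i j : zeta_exp (E i j) = w i j.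
Proof.
rewrite /E /Emat mxE; case: pickP => [m /eqP //| no_exp].
case: w_param => _ _ w3; have [m wij] := prim_rootP zeta_prim (w3 i j).
by move: (no_exp m); rewrite wij eqxx.
Qed.

Lemma Emat_skew i j : E j i = - E i j.
Proof.
case: w_param => _ w_inv _; apply/eqP; rewrite -addr_eq0; apply/eqP/zeta_exp_inj.
by rewrite zeta_expD !zeta_exp_Emat w_inv zeta_exp0.
Qed.

Lemma tri_prod_eq1E i j h : (w i j * w j h * w h i == 1) = tri_vanish E i j h.
Proof.
by rewrite -!zeta_exp_Emat -!zeta_expD -zeta_exp0 (inj_eq zeta_exp_inj).
Qed.

Lemma is_faceE F : is_face w F = tri_closed (tri_vanish E) F.
Proof.
apply: eq_forallb_in => i _; apply: eq_forallb_in => j _; apply: eq_forallb_in => h _.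
rewrite tri_prod_eq1E; case: (boolP [&& _, _ & _]) => //=.
have degen := tri_sum_degen Emat_skew.
rewrite /tri_vanish -!negb_or !negbK => /or3P [] /eqP ->;
  first [by rewrite degen | by rewrite tri_sum_rot degen | by rewrite -tri_sum_rot degen].
Qed.

Lemma is_face_subset (F G : {set 'I_n}) : F \subset G -> is_face w G -> is_face w F.
Proof. by move=> sFG; rewrite !is_faceE; apply: tri_closedS. Qed.

Lemma is_facetE F : is_facet w F = maxset (is_face w) F.
Proof.
apply/andP/maxsetP => -[wF maxF]; split=> //.
  by move=> G wG sFG; apply/eqP; move/forallP/(_ G): maxF; rewrite wG sFG.
by apply/forallP => G; apply/implyP => /andP [wG sFG]; rewrite (maxF G).
Qed.

End ExponentMatrix.

Section PointComplexIso.
Variables (k : fieldType) (zeta : k) (n : nat) (w w' : 'M[k]_n).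
Hypotheses (zeta_prim : 3.-primitive_root zeta)
           (w_param : cube_root_param w) (w'_param : cube_root_param w').

Lemma is_facet_permE (s : 'S_n) :
  (forall F, is_facet w F = is_facet w' (s @: F)) <->
  (forall i j h, tri_vanish (Emat zeta w) i j h =
                 tri_vanish (Emat zeta w') (s i) (s j) (s h)).
Proof.
have E_skew := Emat_skew zeta_prim w_param.
have E'_skew := Emat_skew zeta_prim w'_param.
have face_subset := is_face_subset zeta_prim w_param.
have face'_subset := is_face_subset zeta_prim w'_param.
have tri_faces := tri_closed_permE s
  (tri_vanish_rot (Emat zeta w)) (tri_vanish_swap E_skew) (tri_vanish_degen E_skew)
  (tri_vanish_rot (Emat zeta w')) (tri_vanish_swap E'_skew) (tri_vanish_degen E'_skew).
have max_faces := maxset_imset_permE s face_subset face'_subset.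
have faceE := is_faceE zeta_prim w_param; have face'E := is_faceE zeta_prim w'_param.
split=> [facets | /tri_faces tri_vanish_s F].
  apply/tri_faces => F; rewrite -faceE -face'E; move: F.
  by apply/max_faces => F; rewrite -!is_facetE.
rewrite !is_facetE; move: F; apply/max_faces => F.
by rewrite faceE face'E.
Qed.

End PointComplexIso.

Theorem proposition5p4 (k : closedFieldType) (hk : [pchar k] =i pred0)
    (zeta : k) (hzeta : 3.-primitive_root zeta) (n : nat)
    (w w' : 'M[k]_n) (hw : cube_root_param w) (hw' : cube_root_param w') :
  complex_iso w w' <->
  (exists s : 'S_n, forall (v : 'I_n) (N N' : 'M['Z_3]_n),
      is_isolation (Emat zeta w) v N ->
      is_isolation (Emat zeta w') (s v) N' ->
      graph_iso s N N').
Proof.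
have graph_isoE := isolation_graph_isoE _ (Emat_skew hzeta hw) (Emat_skew hzeta hw').
split=> -[s iso_s]; exists s.
  exact/graph_isoE/(is_facet_permE hzeta hw hw').
exact/(is_facet_permE hzeta hw hw')/graph_isoE.
Qed.
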